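(* Let $K \geq 1$ be an integer. Let $X$ be uniformly distributed on $[0,1)$, and let $K-1$ thresholds be drawn independently of each other and of $X$, each uniformly distributed on $[0,1)$; denote them in ascending order by $a_1 \leq a_2 \leq \cdots \leq a_{K-1}$, and set $a_0 = 0$, $a_K = 1$. Define the lossy encoder $\alpha:[0,1) \to \{1,2,\ldots,K\}$ by $\alpha(x) = k$ for $x \in [a_{k-1}, a_k)$, and the decoder $\beta:\{1,\ldots,K\} \to [0,1)$ by $\beta(k) = \tfrac{1}{2}(a_{k-1}+a_k)$. Then the mean-squared error, averaged over both $X$ and the random thresholds, is $$D = \mathbb{E}\big[(X - \beta(\alpha(X)))^2\big] = \frac{1}{2(K+1)(K+2)}.$$ *)

From HB Require Import structures.
From mathcomp Require Import all_boot all_order all_algebra.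
From mathcomp Require Import all_classical all_reals all_analysis.
Set Implicit Arguments. Unset Strict Implicit. Unset Printing Implicit Defensive.
Import Order.TTheory GRing.Theory Num.Theory.
Local Open Scope classical_set_scope.
Local Open Scope ring_scope.

Section Quantizer.
Variable R : realType.

Definition thr (ts : seq R) (k : nat) : R :=
  nth 1 (0 :: sort <=%R ts ++ [:: 1]) k.

(* Encoder alpha : [0,1) -> {1..K}, alpha x = k for x in [a_{k-1}, a_k):
   the least k >= 1 with x < a_k (for x in [0,1), a_{k-1} <= x then holds). *)
Definition encoder (ts : seq R) (x : R) : nat :=
  (find (fun a => x < a) (sort <=%R ts ++ [:: 1])).+1.

Definition decoder (ts : seq R) (k : nat) : R :=
  (thr ts k.-1 + thr ts k) / 2.

Definition sq_err (ts : seq R) (x : R) : R :=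
  (x - decoder ts (encoder ts x)) ^+ 2.

(* Expectation over n i.i.d. Uniform[0,1) variables, written as the
   iterated Lebesgue integral over [0,1)^n (equal to the product-measure
   expectation by Fubini). *)
Fixpoint iter_unif_exp (n : nat) (f : seq R -> R) : R :=
  match n with
  | 0 => f [::]
  | n'.+1 => Rintegral lebesgue_measure `[0%R, 1%R[
               (fun t => iter_unif_exp n' (fun s => f (t :: s)))
  end.

Definition distortion (K : nat) : R :=
  Rintegral lebesgue_measure `[0%R, 1%R[
    (fun x => iter_unif_exp K.-1 (fun ts => sq_err ts x)).

End Quantizer.

(* Fix the source value x and let a, b be the distances from x down and up to
   the nearest threshold (or to the end points 0 and 1); the decoder's error is
   ((a - b) / 2)^2.  Integrating out the thresholds one at a time only requires
   tracking the current cell [x - a, x + b): when n thresholds remain to be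
   drawn, the expected error is an explicit polynomial cell_mse n a b.  A new
   uniform threshold t shrinks either a (if t <= x) or b (if t > x); integrating
   over t piecewise on [0, x - a], ]x - a, x], ]x, x + b[ and [x + b, 1[ by the
   fundamental theorem of calculus gives the recursion from n to n + 1.
   Finally, integrating cell_mse (K - 1) x (1 - x) over x yields
   1 / (2 (K + 1) (K + 2)). *)

From HB Require Import structures.
From mathcomp Require Import all_boot all_order all_algebra.
From mathcomp Require Import all_classical all_reals all_analysis.
From mathcomp Require Import measurable_realfun ring lra.
Set Implicit Arguments. Unset Strict Implicit. Unset Printing Implicit Defensive.
Import Order.TTheory GRing.Theory Num.Theory numFieldNormedType.Exports.
Local Open Scope classical_set_scope.
Local Open Scope ring_scope.

Lemma integrable_setU d (T : measurableType d) (R : realType)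
    (mu : {measure set T -> \bar R}) (A B : set T) (f : T -> \bar R) :
  measurable A -> measurable B -> [disjoint A & B] ->
  mu.-integrable A f -> mu.-integrable B f -> mu.-integrable (A `|` B) f.
Proof.
move=> mA mB AB /integrableP[mfA iA] /integrableP[mfB iB].
have mf : measurable_fun (A `|` B) f by exact/measurable_funU.
apply/integrableP; split => //.
by rewrite ge0_integral_setU //;
  [exact: lte_add_pinfty | exact: measurableT_comp].
Qed.

Section interval_integrals.
Variable R : realType.
Local Notation mu := (@lebesgue_measure R).

Lemma disjoint_itv_bndbnd (a b c : itv_bound R) :
  [disjoint [set` Interval a b] & [set` Interval b c]].
Proof.
rewrite disj_set2E; apply/eqP; rewrite -subset0 => x [] /=.
rewrite !itv_boundlr => /andP[_ xb] /andP[bx _].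
by have := le_trans xb bx; rewrite leBRight_ltBLeft ltxx.
Qed.

Lemma Rintegral_itv_split (a b c : itv_bound R) (f : R -> R) :
  (a <= b)%O -> (b <= c)%O ->
  mu.-integrable [set` Interval a b] (EFin \o f) ->
  mu.-integrable [set` Interval b c] (EFin \o f) ->
  mu.-integrable [set` Interval a c] (EFin \o f) /\
  \int[mu]_(x in [set` Interval a c]) f x =
    \int[mu]_(x in [set` Interval a b]) f x +
    \int[mu]_(x in [set` Interval b c]) f x.
Proof.
move=> ab bc iab ibc; rewrite (itv_bndbnd_setU ab bc).
have dabc := disjoint_itv_bndbnd a b c.
have iac : mu.-integrable
    ([set` Interval a b] `|` [set` Interval b c]) (EFin \o f).
  exact: integrable_setU.
by split => //; rewrite Rintegral_setU.
Qed.

Lemma derivable_continuous (g : R -> R) :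
  (forall t : R, derivable g t 1) -> continuous g.
Proof. by move=> dg t; apply/differentiable_continuous/derivable1_diffP. Qed.

Lemma Rintegral_itv_antiderivative (g F : R -> R) (c d : R) (b1 b2 : bool) :
  c <= d -> (forall t : R, is_derive t 1 F (g t)) -> continuous g ->
  mu.-integrable [set` Interval (BSide b1 c) (BSide b2 d)] (EFin \o g) /\
  \int[mu]_(t in [set` Interval (BSide b1 c) (BSide b2 d)]) g t = F d - F c.
Proof.
move=> cd dF cg.
have cgcd : {within `[c, d], continuous g} by exact: continuous_subspaceT.
have icd : mu.-integrable `[c, d] (EFin \o g).
  by apply: continuous_compact_integrable => //; exact: segment_compact.
have isub b1' b2' :
    mu.-integrable [set` Interval (BSide b1' c) (BSide b2' d)] (EFin \o g).
  apply: integrableS icd => //; apply: subset_itv.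
  - by case: b1'; rewrite bnd_simp.
  - by case: b2'; rewrite bnd_simp.
split; first exact: isub.
have -> : \int[mu]_(t in [set` Interval (BSide b1 c) (BSide b2 d)]) g t =
          \int[mu]_(t in `[c, d]) g t.
  case: b1; case: b2 => //.
  - by rewrite Rintegral_itv_bndo_bndc //; exact: isub.
  - rewrite Rintegral_itv_obnd_cbnd; last exact: (isub false true).
    by rewrite Rintegral_itv_bndo_bndc //; exact: isub.
  - by rewrite Rintegral_itv_obnd_cbnd //; exact: (isub false false).
have [<-|cneqd] := eqVneq c d; first by rewrite set_itv1 Rintegral_set1 subrr.
have {}cd : c < d by rewrite lt_neqAle cneqd cd.
have cF : continuous F by apply: derivable_continuous => t; exact: ex_derive.
rewrite /Rintegral (@continuous_FTC2 _ g F _ _ cd cgcd) //.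
- split; first by move=> t _; exact: ex_derive.
  + exact: cvg_at_right_filter (cF c).
  + exact: cvg_at_left_filter (cF d).
- by move=> t _; rewrite derive1E; exact: derive_val.
Qed.

Lemma Rintegral_itv_antiderivative_on (f g F : R -> R) (c d : R) (b1 b2 : bool) :
  c <= d -> (forall t : R, is_derive t 1 F (g t)) -> continuous g ->
  {in Interval (BSide b1 c) (BSide b2 d), f =1 g} ->
  mu.-integrable [set` Interval (BSide b1 c) (BSide b2 d)] (EFin \o f) /\
  \int[mu]_(t in [set` Interval (BSide b1 c) (BSide b2 d)]) f t = F d - F c.
Proof.
move=> cd dF cg fg.
have [ig <-] := Rintegral_itv_antiderivative b1 b2 cd dF cg.
split; last by apply: eq_Rintegral => t /set_mem; exact: fg.
by apply: eq_integrable ig => // t /set_mem tI /=; rewrite fg.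
Qed.

End interval_integrals.

Section derivative_rules.
Variable R : realType.

(* Unlike [is_derive], [deriv_at] is not a typeclass, so [eapply] of the rules
   below leaves the derivative to unification; typeclass resolution of
   [is_derive] diverges on the polynomial expressions of this development. *)
Definition deriv_at (f : R -> R) (t d : R) := is_derive t 1 f d.

Lemma deriv_atE (f : R -> R) (t d d' : R) :
  deriv_at f t d -> d = d' -> is_derive t 1 f d'.
Proof. by move=> fd <-. Qed.

Lemma deriv_at_derivable (f : R -> R) (t d : R) :
  deriv_at f t d -> derivable f t 1.
Proof. by rewrite /deriv_at => fd; exact: ex_derive. Qed.

Lemma deriv_at_cst (c t : R) : deriv_at (fun=> c) t 0.
Proof. exact: is_derive_cst. Qed.

Lemma deriv_at_id (t : R) : deriv_at id t 1.
Proof. exact: is_derive_id. Qed.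

Lemma deriv_atD (f g : R -> R) (t df dg : R) :
  deriv_at f t df -> deriv_at g t dg -> deriv_at (fun s => f s + g s) t (df + dg).
Proof. exact: is_deriveD. Qed.

Lemma deriv_atN (f : R -> R) (t df : R) :
  deriv_at f t df -> deriv_at (fun s => - f s) t (- df).
Proof. exact: is_deriveN. Qed.

Lemma deriv_atM (f g : R -> R) (t df dg : R) :
  deriv_at f t df -> deriv_at g t dg ->
  deriv_at (fun s => f s * g s) t (f t * dg + g t * df).
Proof. exact: is_deriveM. Qed.

Lemma deriv_atX (f : R -> R) (n : nat) (t df : R) :
  deriv_at f t df -> deriv_at (fun s => f s ^+ n) t (n%:R * f t ^+ n.-1 * df).
Proof. by move=> fd; move: (is_deriveX n fd); rewrite exprfctE. Qed.

End derivative_rules.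

Ltac solve_deriv := first
  [ eapply deriv_at_cst | eapply deriv_at_id
  | eapply deriv_atD; [solve_deriv | solve_deriv]
  | eapply deriv_atN; solve_deriv
  | eapply deriv_atM; [solve_deriv | solve_deriv]
  | eapply deriv_atX; solve_deriv ].

Ltac natr_neq0 R n :=
  repeat (apply/andP; split); apply/eqP => ?; have := ler0n R n; lra.

Section cell_distortion.
Variable R : realType.
Implicit Types (n : nat) (a b t x : R).

(* If A is the distance from x down to the nearest of n uniform thresholds,
   capped at a, then P(A > s) = (1 - s)^n for s < a, so
   E[A^2] = \int_0^a 2 s (1 - s)^n ds = sq_moment n a.  With B the distance
   upwards, capped at b,
   E[A B] = \int_0^a \int_0^b (1 - s - r)^n = cross_moment n a b.
   Hence cell_mse n a b = E[((A - B) / 2)^2]. *)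
Definition sq_moment n a : R :=
  2 * (1 - (1 - a) ^+ n.+1) / n.+1%:R - 2 * (1 - (1 - a) ^+ n.+2) / n.+2%:R.

Definition cross_moment n a b : R :=
  (1 - (1 - a) ^+ n.+2 - (1 - b) ^+ n.+2 + (1 - a - b) ^+ n.+2)
  / (n.+1%:R * n.+2%:R).

Definition cell_mse n a b : R :=
  (sq_moment n a + sq_moment n b - 2 * cross_moment n a b) / 4.

Definition sq_moment_prim n a : R :=
  2 * (a - (1 - (1 - a) ^+ n.+2) / n.+2%:R) / n.+1%:R
  - 2 * (a - (1 - (1 - a) ^+ n.+3) / n.+3%:R) / n.+2%:R.

Definition cross_moment_prim n a b : R :=
  (a - (1 - (1 - a) ^+ n.+3) / n.+3%:R - a * (1 - b) ^+ n.+2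
   + ((1 - b) ^+ n.+3 - (1 - a - b) ^+ n.+3) / n.+3%:R) / (n.+1%:R * n.+2%:R).

Definition cell_mse_prim n a b : R :=
  (sq_moment_prim n a + a * sq_moment n b - 2 * cross_moment_prim n a b) / 4.

Definition mse_prim n x : R :=
  (sq_moment_prim n x - sq_moment_prim n (1 - x)
   - 2 * (x + (1 - x) ^+ n.+3 / n.+3%:R - x ^+ n.+3 / n.+3%:R)
     / (n.+1%:R * n.+2%:R)) / 4.

Lemma cell_mse0 a b : cell_mse 0 a b = (a - b) ^+ 2 / 4.
Proof. by rewrite /cell_mse /sq_moment /cross_moment !exprS !expr0; field. Qed.

Lemma cell_mseC n a b : cell_mse n a b = cell_mse n b a.
Proof.
by rewrite /cell_mse /cross_moment (addrAC 1 (- b)); field; natr_neq0 R n.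
Qed.

Lemma cell_mse_prim0 n b : cell_mse_prim n 0 b = 0.
Proof.
rewrite /cell_mse_prim /sq_moment_prim /cross_moment_prim !subr0 !expr1n subrr.
by field; natr_neq0 R n.
Qed.

Lemma cell_mseS n a b :
  cell_mse n.+1 a b =
  (1 - a - b) * cell_mse n a b + cell_mse_prim n a b + cell_mse_prim n b a.
Proof.
rewrite /cell_mse_prim /cell_mse /sq_moment /cross_moment.
rewrite /sq_moment_prim /cross_moment_prim (addrAC 1 (- b)) !exprS.
by field; natr_neq0 R n.
Qed.

Lemma is_derive_cell_mse_prim_subl n x b t :
  is_derive t 1 (fun s => - cell_mse_prim n (x - s) b) (cell_mse n (x - t) b).
Proof.
rewrite /cell_mse_prim /sq_moment_prim /cross_moment_prim.
apply: deriv_atE; first solve_deriv.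
by rewrite /cell_mse /sq_moment /cross_moment /= !exprS; field; natr_neq0 R n.
Qed.

Lemma is_derive_cell_mse_prim_subr n x a t :
  is_derive t 1 (fun s => cell_mse_prim n (s - x) a) (cell_mse n (t - x) a).
Proof.
rewrite /cell_mse_prim /sq_moment_prim /cross_moment_prim.
apply: deriv_atE; first solve_deriv.
by rewrite /cell_mse /sq_moment /cross_moment /= !exprS; field; natr_neq0 R n.
Qed.

Lemma is_derive_mse_prim n t : is_derive t 1 (mse_prim n) (cell_mse n t (1 - t)).
Proof.
rewrite /mse_prim /sq_moment_prim; apply: deriv_atE; first solve_deriv.
rewrite /cell_mse /sq_moment /cross_moment /= subrr.
have -> : 1 - (1 - t) = t by ring.
by rewrite !exprS !expr0n /=; field; natr_neq0 R n.
Qed.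

Lemma mse_prim01 n : mse_prim n 1 - mse_prim n 0 = (2 * n.+2%:R * n.+3%:R)^-1.
Proof.
rewrite /mse_prim /sq_moment_prim !subrr !subr0 !expr0n !expr1n ?subrr ?expr0n /=.
rewrite !(mul0r, subr0, sub0r, addr0, mulr0, oppr0).
by field; natr_neq0 R n.
Qed.

End cell_distortion.

Section nearest_thresholds.
Variable R : realType.
Implicit Types (x c y u : R) (s : seq R).

Definition lower_nbr x c s := \big[Num.max/c]_(t <- s | t <= x) t.
Definition upper_nbr x c s := \big[Num.min/c]_(t <- s | x < t) t.

Lemma lower_nbr_max x y c s :
  lower_nbr x (Num.max y c) s = Num.max y (lower_nbr x c s).
Proof.
rewrite /lower_nbr; elim: s => [|t s IH]; first by rewrite !big_nil.
by rewrite !big_cons IH; case: ifP => // _; rewrite maxCA.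
Qed.

Lemma upper_nbr_min x y c s :
  upper_nbr x (Num.min y c) s = Num.min y (upper_nbr x c s).
Proof.
rewrite /upper_nbr; elim: s => [|t s IH]; first by rewrite !big_nil.
by rewrite !big_cons IH; case: ifP => // _; rewrite minCA.
Qed.

Lemma lower_nbr_cons x c t s :
  lower_nbr x c (t :: s) = lower_nbr x (if t <= x then Num.max c t else c) s.
Proof.
rewrite {1}/lower_nbr big_cons; case: ifP => // _.
by rewrite (maxC c t) lower_nbr_max.
Qed.

Lemma upper_nbr_cons x c t s :
  upper_nbr x c (t :: s) = upper_nbr x (if x < t then Num.min c t else c) s.
Proof.
rewrite {1}/upper_nbr big_cons; case: ifP => // _.
by rewrite (minC c t) upper_nbr_min.
Qed.

Lemma lower_nbr_gt x c s : all (fun t => x < t) s -> lower_nbr x c s = c.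
Proof.
rewrite /lower_nbr; elim: s => [|t s IH]; first by rewrite big_nil.
by rewrite big_cons /= => /andP[xt /IH ->]; rewrite leNgt xt.
Qed.

Lemma upper_nbr_ge x y u s :
  y <= u -> all (fun t => y <= t) s -> y <= upper_nbr x u s.
Proof.
rewrite /upper_nbr => yu; elim: s => [|t s IH]; first by rewrite big_nil.
rewrite big_cons /= => /andP[yt /IH yl].
by case: ifP => // _; rewrite le_min yt yl.
Qed.

Lemma sorted_cell_endpoints x c s :
  x < 1 -> sorted <=%R s -> c <= x -> all (fun t => c <= t) s ->
  all (fun t => t < 1) s ->
  nth 1 (c :: s ++ [:: 1]) (find (fun a => x < a) (s ++ [:: 1]))
    = lower_nbr x c s /\
  nth 1 (s ++ [:: 1]) (find (fun a => x < a) (s ++ [:: 1]))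
    = upper_nbr x 1 s.
Proof.
move=> x1; elim: s c => [|y s IH] c.
  by move=> _ _ _ _ /=; rewrite x1 /lower_nbr /upper_nbr !big_nil.
move=> /= sys cx /andP[cy cs] /andP[y1 s1].
have ys : all (fun t => y <= t) s := order_path_min (@le_trans _ R) sys.
have ss : sorted <=%R s := path_sorted sys.
have [xy|yx] /= := ltP x y.
  split.
    rewrite lower_nbr_cons ifF; last by rewrite leNgt xy.
    rewrite lower_nbr_gt //; apply/allP => t ts.
    by apply: lt_le_trans xy _; move/allP: ys => /(_ t ts).
  rewrite upper_nbr_cons ifT // (minC 1 y) upper_nbr_min min_l //.
  by apply: upper_nbr_ge => //; exact: ltW.
have [-> ->] := IH y ss yx ys s1.
by rewrite lower_nbr_cons upper_nbr_cons yx max_r // ifF // ltNge yx.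
Qed.

Definition mid_sqerr x c u : R := (x - (c + u) / 2) ^+ 2.

Lemma sq_errE x ts : 0 <= x < 1 -> all (fun t => 0 <= t < 1) ts ->
  sq_err ts x = mid_sqerr x (lower_nbr x 0 ts) (upper_nbr x 1 ts).
Proof.
move=> /andP[x0 x1] hts.
set r := sort <=%R ts.
have pr : perm_eq r ts by rewrite perm_sort.
have sr : sorted <=%R r by apply: sort_sorted; exact: le_total.
have ar : all (fun t => 0 <= t < 1) r by rewrite (perm_all _ pr).
have r0 : all (fun t => 0 <= t) r by apply/allP => t /(allP ar) /andP[].
have r1 : all (fun t => t < 1) r by apply/allP => t /(allP ar) /andP[].
have [lE uE] := sorted_cell_endpoints x1 sr x0 r0 r1.
rewrite /lower_nbr /upper_nbr -!(perm_big _ pr).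
rewrite -/(lower_nbr _ _ _) -/(upper_nbr _ _ _).
by rewrite /sq_err /decoder /encoder /thr /= -/r lE uE.
Qed.

End nearest_thresholds.

Section expected_distortion.
Variable R : realType.
Local Notation mu := (@lebesgue_measure R).
Implicit Types (n : nat) (x l u : R).

Definition refined_cell_mse n x l u (t : R) : R :=
  if t <= x then cell_mse n (x - Num.max l t) (u - x)
  else cell_mse n (x - l) (Num.min u t - x).

Lemma Rintegral_refined_cell_mse n x l u :
  0 <= l -> l <= x -> x < u -> u <= 1 ->
  \int[mu]_(t in `[0, 1[) refined_cell_mse n x l u t =
    cell_mse n.+1 (x - l) (u - x).
Proof.
move=> l0 lx xu u1; set a := x - l; set b := u - x.
set f := refined_cell_mse n x l u.
have dC (t : R) : is_derive t 1 (fun s => s * cell_mse n a b) (cell_mse n a b).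
  by apply: deriv_atE; first solve_deriv; rewrite /= mulr0 add0r mulr1.
have cC : continuous (fun _ : R => cell_mse n a b) by exact: cst_continuous.
have cl : continuous (fun t => cell_mse n (x - t) b).
  apply: derivable_continuous => t; apply: deriv_at_derivable.
  by rewrite /cell_mse /sq_moment /cross_moment; solve_deriv.
have cu : continuous (fun t => cell_mse n (t - x) a).
  apply: derivable_continuous => t; apply: deriv_at_derivable.
  by rewrite /cell_mse /sq_moment /cross_moment; solve_deriv.
have f1 : {in `[0, l], f =1 (fun _ => cell_mse n a b)}.
  move=> t; rewrite in_itv /= => /andP[_ tl].
  by rewrite /f /refined_cell_mse (le_trans tl lx) max_l.
have f2 : {in `]l, x], f =1 (fun t => cell_mse n (x - t) b)}.
  move=> t; rewrite in_itv /= => /andP[lt tx].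
  by rewrite /f /refined_cell_mse tx max_r // ltW.
have f3 : {in `]x, u[, f =1 (fun t => cell_mse n (t - x) a)}.
  move=> t; rewrite in_itv /= => /andP[xt tu].
  by rewrite /f /refined_cell_mse leNgt xt /= min_r ?ltW // cell_mseC.
have f4 : {in `[u, 1[, f =1 (fun _ => cell_mse n a b)}.
  move=> t; rewrite in_itv /= => /andP[ut _].
  by rewrite /f /refined_cell_mse leNgt (lt_le_trans xu ut) /= min_l.
have [i1 v1] := Rintegral_itv_antiderivative_on l0 dC cC f1.
have [i2 v2] := Rintegral_itv_antiderivative_on lx
  (is_derive_cell_mse_prim_subl n x b) cl f2.
have [i3 v3] := Rintegral_itv_antiderivative_on (ltW xu)
  (is_derive_cell_mse_prim_subr n x a) cu f3.
have [i4 v4] := Rintegral_itv_antiderivative_on u1 dC cC f4.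
have [i34 v34] := Rintegral_itv_split (xu : (BRight x <= BLeft u)%O)
  (u1 : (BLeft u <= BLeft 1)%O) i3 i4.
have [i24 v24] := Rintegral_itv_split (lx : (BRight l <= BRight x)%O)
  ((lt_le_trans xu u1) : (BRight x <= BLeft 1)%O) i2 i34.
have [_ v14] := Rintegral_itv_split (l0 : (BLeft 0 <= BRight l)%O)
  ((le_lt_trans lx (lt_le_trans xu u1)) : (BRight l <= BLeft 1)%O) i1 i24.
rewrite v14 v24 v34 v1 v2 v3 v4 /= cell_mseS !subrr !cell_mse_prim0.
by rewrite /a /b; ring.
Qed.

Lemma eq_iter_unif_exp n (f g : seq R -> R) :
  (forall s, all (fun t => 0 <= t < 1) s -> f s = g s) ->
  iter_unif_exp n f = iter_unif_exp n g.
Proof.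
elim: n f g => [|n IH] f g fg /=; first exact: fg.
apply: eq_Rintegral => t /set_mem; rewrite /= in_itv /= => t01.
by apply: IH => s s01; apply: fg; rewrite /= t01.
Qed.

Lemma iter_unif_exp_mid_sqerr n x l u : 0 <= l -> l <= x -> x < u -> u <= 1 ->
  iter_unif_exp n (fun s => mid_sqerr x (lower_nbr x l s) (upper_nbr x u s)) =
  cell_mse n (x - l) (u - x).
Proof.
elim: n l u => [|n IH] l u l0 lx xu u1.
  by rewrite /= /mid_sqerr /lower_nbr /upper_nbr !big_nil cell_mse0; field.
rewrite /= -Rintegral_refined_cell_mse //.
apply: eq_Rintegral => t /set_mem; rewrite /= in_itv /= => /andP[t0 t1].
under eq_fun do rewrite lower_nbr_cons upper_nbr_cons.
rewrite /refined_cell_mse; case: (leP t x) => [tx | xt].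
  by apply: IH; rewrite ?le_max ?l0 ?ge_max ?lx ?tx.
by apply: IH; rewrite ?lt_min ?xu ?xt ?ge_min ?u1.
Qed.

End expected_distortion.

Theorem theorem1 (R : realType) (K : nat) (hK : (1 <= K)%N) :
  distortion R K = (2 * (K.+1)%:R * (K.+2)%:R)^-1.
Proof.
case: K hK => // n _.
rewrite -mse_prim01 /distortion /=.
transitivity (\int[lebesgue_measure]_(x in `[0, 1[) cell_mse n x (1 - x) : R).
  apply: eq_Rintegral => x /set_mem; rewrite /= in_itv /= => /andP[x0 x1].
  rewrite -[X in _ = cell_mse _ X _](subr0 x) -iter_unif_exp_mid_sqerr //.
  by apply: eq_iter_unif_exp => s; apply: sq_errE; rewrite x0 x1.
have dcell t : derivable (fun x : R => cell_mse n x (1 - x)) t 1.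
  apply: deriv_at_derivable.
  by rewrite /cell_mse /sq_moment /cross_moment; solve_deriv.
by have [_ ->] := Rintegral_itv_antiderivative true true ler01
  (is_derive_mse_prim n) (derivable_continuous dcell).
Qed.
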